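(* Let $\mathcal C$ be the class of structures $\mathbb X=\langle X,\rho\rangle$ with $|X|=\omega$ and $\rho$ an equivalence relation on $X$ such that (C1) infinitely many $\rho$-classes are singletons, and (C2) for each $n\in\omega$ there is a $\rho$-class of size $\ge n$. Let $\mathcal C_{\mathrm{fin}}$ be the set of $\mathbb X\in\mathcal C$ all of whose classes are finite, and $\mathcal C_\omega=\mathcal C\setminus\mathcal C_{\mathrm{fin}}$. Then for all $\mathbb X,\mathbb Y\in\mathcal C$: (a) $\mathbb X\equiv_{\mathcal P}\mathbb Y$; (b) $\mathbb X\preccurlyeq_c\mathbb Y$ iff $\mathbb X\in\mathcal C_{\mathrm{fin}}$ or $\mathbb Y\in\mathcal C_\omega$; (c) $\mathbb X\sim_c\mathbb Y$ iff either both $\mathbb X,\mathbb Y\in\mathcal C_{\mathrm{fin}}$ or both $\mathbb X,\mathbb Y\in\mathcal C_\omega$.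
   Context: The language has one binary relation symbol $R$. A condensation from $\langle X,\rho\rangle$ onto $\langle Y,\sigma\rangle$ is a bijection $F:X\to Y$ with $x\,\rho\,x'\Rightarrow F(x)\,\sigma\,F(x')$; $\mathbb X\preccurlyeq_c\mathbb Y$ means a condensation exists, and $\mathbb X\sim_c\mathbb Y$ means $\mathbb X\preccurlyeq_c\mathbb Y$ and $\mathbb Y\preccurlyeq_c\mathbb X$. $\mathcal P_0$ consists of all atomic formulas ($v_\alpha=v_\beta$, $R(v_\alpha,v_\beta)$) and all $\neg\,v_\alpha=v_\beta$; $\mathcal P$ is the closure of $\mathcal P_0$ under finite conjunctions, finite disjunctions, $\forall v$ and $\exists v$ (no negation). $\mathbb X\equiv_{\mathcal P}\mathbb Y$ means $\mathbb X$ and $\mathbb Y$ satisfy the same sentences of $\mathcal P$. *)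

From Stdlib Require Import List Classes.RelationClasses.
Import ListNotations.

(* Formulas of the positive fragment P: built from P_0 (atomic formulas
   v_i = v_j, R(v_i,v_j), and negated equalities ~ v_i = v_j) by finite
   conjunctions, finite disjunctions, forall and exists. *)
Inductive pform : Type :=
| PEq  : nat -> nat -> pform
| PR   : nat -> nat -> pform
| PNeq : nat -> nat -> pform
| PAnd : pform -> pform -> pform
| POr  : pform -> pform -> pform
| PAll : nat -> pform -> pform
| PEx  : nat -> pform -> pform.

Definition upd {X : Type} (e : nat -> X) (i : nat) (x : X) : nat -> X :=
  fun j => if Nat.eqb j i then x else e j.

Fixpoint sat {X : Type} (rho : X -> X -> Prop) (e : nat -> X) (f : pform) : Prop :=
  match f with
  | PEq i j => e i = e j
  | PR i j => rho (e i) (e j)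
  | PNeq i j => e i <> e j
  | PAnd f g => sat rho e f /\ sat rho e g
  | POr f g => sat rho e f \/ sat rho e g
  | PAll i f => forall x : X, sat rho (upd e i x) f
  | PEx i f => exists x : X, sat rho (upd e i x) f
  end.

Fixpoint free_in (k : nat) (f : pform) : Prop :=
  match f with
  | PEq i j | PR i j | PNeq i j => k = i \/ k = j
  | PAnd f g | POr f g => free_in k f \/ free_in k g
  | PAll i f | PEx i f => k <> i /\ free_in k f
  end.

Definition sentence (f : pform) : Prop := forall k, ~ free_in k f.

Definition holds {X : Type} (rho : X -> X -> Prop) (f : pform) : Prop :=
  forall e : nat -> X, sat rho e f.

Definition P_equiv {X Y : Type} (rho : X -> X -> Prop) (sigma : Y -> Y -> Prop) : Prop :=
  forall f, sentence f -> (holds rho f <-> holds sigma f).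

Definition bijection {X Y : Type} (F : X -> Y) : Prop :=
  (forall x x', F x = F x' -> x = x') /\ (forall y, exists x, F x = y).

Definition condensable {X Y : Type} (rho : X -> X -> Prop) (sigma : Y -> Y -> Prop) : Prop :=
  exists F : X -> Y, bijection F /\ (forall x x', rho x x' -> sigma (F x) (F x')).

Definition cond_equiv {X Y : Type} (rho : X -> X -> Prop) (sigma : Y -> Y -> Prop) : Prop :=
  condensable rho sigma /\ condensable sigma rho.

Definition countably_infinite (X : Type) : Prop :=
  exists f : X -> nat, bijection f.

Definition singleton_class {X : Type} (rho : X -> X -> Prop) (x : X) : Prop :=
  forall y, rho x y -> y = x.

Definition infinitely_many {X : Type} (P : X -> Prop) : Prop :=
  ~ exists l : list X, forall x, P x -> In x l.

Definition class_size_ge {X : Type} (rho : X -> X -> Prop) (x : X) (n : nat) : Prop :=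
  exists l : list X, length l = n /\ NoDup l /\ forall y, In y l -> rho x y.

Definition class_finite {X : Type} (rho : X -> X -> Prop) (x : X) : Prop :=
  exists l : list X, forall y, rho x y -> In y l.

(* The class C. Since distinct singleton classes have distinct elements,
   "infinitely many singleton classes" = infinitely many x with class {x}. *)
Definition inC (X : Type) (rho : X -> X -> Prop) : Prop :=
  countably_infinite X /\ Equivalence rho /\
  infinitely_many (singleton_class rho) /\
  (forall n : nat, exists x, class_size_ge rho x n).

Definition inCfin (X : Type) (rho : X -> X -> Prop) : Prop :=
  inC X rho /\ forall x, class_finite rho x.

Definition inComega (X : Type) (rho : X -> X -> Prop) : Prop :=
  inC X rho /\ ~ inCfin X rho.

From Stdlib Require Import List Classes.RelationClasses.
From Stdlib Require Import Arith Classical ClassicalEpsilon Lia.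
Import ListNotations.

(* (a) Positive sentences need [R] preserved in one direction only, but
   equality in both.  In the game from [X] to [Y], the duplicator answers
   every element of a non-singleton class of [X] inside one class of [Y]
   that still has as many unused elements as rounds remain (C2), and answers
   new elements of [Y] by fresh singletons of [X] (C1); by symmetry
   [X ≡_P Y].
   (b) Condensations are built by back and forth along finite partial
   injections.  New points of [Y] are always taken by fresh singletons of [X].
   If all classes of [X] are finite, a new point of [X] brings its whole class,
   sent into a large enough class of [Y]; if [Y] has an infinite class, every
   non-singleton point of [X] goes there.  Conversely the preimage of a finite
   class under a condensation is finite, so only [X] in [C_fin] condenses onto
   [Y] in [C_fin].  (c) is (b) applied in both directions. *)

Definition decide_prop {T : Type} (P : T -> Prop) (z : T) : bool :=
  if excluded_middle_informative (P z) then true else false.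

Lemma decide_prop_spec {T : Type} (P : T -> Prop) (z : T) : decide_prop P z = true <-> P z.
Proof.
  unfold decide_prop; destruct (excluded_middle_informative (P z)); split; intros;
    try discriminate; tauto.
Qed.

Lemma In_filter_decide_prop {T : Type} (P : T -> Prop) (l : list T) (z : T) :
  In z (filter (decide_prop P) l) <-> In z l /\ P z.
Proof. rewrite filter_In, decide_prop_spec. reflexivity. Qed.

Definition classical_eq_dec {T : Type} (x y : T) : {x = y} + {x <> y} :=
  excluded_middle_informative (x = y).

Lemma class_finite_list {X : Type} (rho : X -> X -> Prop) (x : X) :
  class_finite rho x -> exists C, NoDup C /\ forall z, In z C <-> rho x z.
Proof.
  intros [l Hl]. exists (nodup classical_eq_dec (filter (decide_prop (rho x)) l)).
  split; [apply NoDup_nodup|].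
  intros z. rewrite nodup_In, In_filter_decide_prop. split; [tauto|auto].
Qed.

Lemma NoDup_diff_length {T : Type} (l R : list T) : NoDup l ->
  exists l', NoDup l' /\ (forall z, In z l' -> In z l /\ ~ In z R) /\
             length l <= length l' + length R.
Proof.
  intros Hl. set (P := fun z => ~ In z R).
  exists (filter (decide_prop P) l). split; [|split].
  - apply NoDup_filter, Hl.
  - intros z Hz. apply In_filter_decide_prop in Hz. exact Hz.
  - rewrite <- (filter_length (decide_prop P) l).
    enough (length (filter (fun z => negb (decide_prop P z)) l) <= length R) by lia.
    apply NoDup_incl_length; [apply NoDup_filter, Hl|].
    intros z Hz. apply filter_In in Hz as [_ Hz].
    apply NNPP. intros HR. apply (proj2 (decide_prop_spec P z)) in HR.
    rewrite HR in Hz. discriminate.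
Qed.

Lemma infinitely_many_avoid {T : Type} (P : T -> Prop) (D : list T) :
  infinitely_many P -> exists s, P s /\ ~ In s D.
Proof.
  intros HP. apply NNPP. intros Hno. apply HP. exists D.
  intros x Px. apply NNPP. intros Hx. apply Hno. eauto.
Qed.

Lemma countably_infinite_enum {X : Type} :
  countably_infinite X -> exists g : nat -> X, forall x, exists n, g n = x.
Proof.
  intros [f [f_inj f_surj]]. destruct (choice _ f_surj) as [g Hg].
  exists g. intros x. exists (f x). apply f_inj, Hg.
Qed.

Section PartialMaps.
Context {X Y : Type}.

Definition functional_pairs (p : list (X * Y)) : Prop :=
  forall x y y', In (x, y) p -> In (x, y') p -> y = y'.

Definition injective_pairs (p : list (X * Y)) : Prop :=
  forall x x' y, In (x, y) p -> In (x', y) p -> x = x'.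

Definition partial_injection (p : list (X * Y)) : Prop :=
  functional_pairs p /\ injective_pairs p.

Definition preserves (rho : X -> X -> Prop) (sigma : Y -> Y -> Prop) (p : list (X * Y)) :=
  forall x y x' y', In (x, y) p -> In (x', y') p -> rho x x' -> sigma y y'.

Lemma partial_injection_app (q p : list (X * Y)) :
  partial_injection q -> partial_injection p ->
  (forall x, In x (map fst q) -> ~ In x (map fst p)) ->
  (forall y, In y (map snd q) -> ~ In y (map snd p)) ->
  partial_injection (q ++ p).
Proof.
  intros [qf qi] [pf pi] Hdom Hran. split.
  - intros x y y' H H'. apply in_app_iff in H, H'.
    destruct H as [H|H], H' as [H'|H']; eauto; exfalso.
    + apply (Hdom x); [apply (in_map fst) in H | apply (in_map fst) in H']; auto.
    + apply (Hdom x); [apply (in_map fst) in H' | apply (in_map fst) in H]; auto.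
  - intros x x' y H H'. apply in_app_iff in H, H'.
    destruct H as [H|H], H' as [H'|H']; eauto; exfalso.
    + apply (Hran y); [apply (in_map snd) in H | apply (in_map snd) in H']; auto.
    + apply (Hran y); [apply (in_map snd) in H' | apply (in_map snd) in H]; auto.
Qed.

Lemma partial_injection_cons (x : X) (y : Y) (p : list (X * Y)) :
  partial_injection p -> ~ In x (map fst p) -> ~ In y (map snd p) ->
  partial_injection ((x, y) :: p).
Proof.
  intros Hp Hx Hy. apply (partial_injection_app [(x, y)]); auto.
  - split; intros ? ? ? [E|[]] [E'|[]]; congruence.
  - intros x' [<-|[]]; auto.
  - intros y' [<-|[]]; auto.
Qed.

Lemma combine_partial_injection (C : list X) (L : list Y) :
  NoDup C -> NoDup L -> partial_injection (combine C L).
Proof.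
  revert L. induction C as [|a C IH]; intros [|b L] HC HL;
    try (split; intros ? ? ? []; fail).
  inversion HC; inversion HL; subst. apply partial_injection_cons; auto.
  - intros Ha. apply in_map_iff in Ha as [[a' b'] [<- Hab]].
    apply in_combine_l in Hab. contradiction.
  - intros Hb. apply in_map_iff in Hb as [[a' b'] [<- Hab]].
    apply in_combine_r in Hab. contradiction.
Qed.

Lemma combine_dom (C : list X) (L : list Y) (a : X) :
  length C <= length L -> In a C -> In a (map fst (combine C L)).
Proof.
  revert L. induction C as [|c C IH]; intros [|b L] Hlen Ha; simpl in *; try lia; auto.
  destruct Ha as [<-|Ha]; [left; auto|right; apply IH; auto; lia].
Qed.

End PartialMaps.

(** * Transfer of positive sentences *)

Fixpoint qdepth (f : pform) : nat :=
  match f with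
  | PAnd f g | POr f g => Nat.max (qdepth f) (qdepth g)
  | PAll _ f | PEx _ f => S (qdepth f)
  | _ => 0
  end.

Lemma upd_cases {X Y : Type} (e1 : nat -> X) (e2 : nat -> Y) i x y vs j :
  In j (i :: vs) ->
  (upd e1 i x j = x /\ upd e2 i y j = y) \/
  (In j vs /\ upd e1 i x j = e1 j /\ upd e2 i y j = e2 j).
Proof.
  unfold upd. destruct (Nat.eqb_spec j i) as [E|E]; [left; auto|].
  intros [H|H]; [congruence|right; auto].
Qed.

Section PositiveTransfer.
Variables (X Y : Type) (rho : X -> X -> Prop) (sigma : Y -> Y -> Prop).
Hypotheses (rho_equiv : Equivalence rho) (sigma_equiv : Equivalence sigma)
  (rho_singletons : infinitely_many (singleton_class rho)).

Definition matching (vs : list nat) (e1 : nat -> X) (e2 : nat -> Y) : Prop :=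
  forall i j, In i vs -> In j vs ->
    (e1 i = e1 j <-> e2 i = e2 j) /\ (rho (e1 i) (e1 j) -> sigma (e2 i) (e2 j)).

(* Duplicator's winning positions with [q] rounds left: the variables in [vs]
   are assigned, and the non-singleton part of [X] is matched inside the class
   of [y0], which still has [q] unused elements listed in [l]. *)
Definition winning (q : nat) (vs : list nat) (e1 : nat -> X) (e2 : nat -> Y) : Prop :=
  matching vs e1 e2 /\
  exists y0 l, q <= length l /\ NoDup l /\
    (forall z, In z l -> sigma y0 z /\ forall j, In j vs -> e2 j <> z) /\
    (forall j, In j vs -> singleton_class rho (e1 j) \/ sigma y0 (e2 j)).

Lemma matching_cons vs e1 e2 i x y :
  matching vs e1 e2 ->
  (forall j, In j vs ->
     (x = e1 j <-> y = e2 j) /\ (rho x (e1 j) -> sigma y (e2 j)) /\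
     (rho (e1 j) x -> sigma (e2 j) y)) ->
  matching (i :: vs) (upd e1 i x) (upd e2 i y).
Proof.
  intros Hm Hxy a b Ha Hb.
  destruct (upd_cases e1 e2 i x y vs a Ha) as [[-> ->]|[Ha' [-> ->]]];
  destruct (upd_cases e1 e2 i x y vs b Hb) as [[-> ->]|[Hb' [-> ->]]].
  - split; [tauto|reflexivity].
  - destruct (Hxy b Hb') as [E [R _]]. auto.
  - destruct (Hxy a Ha') as [E [_ R]]. split; [|auto].
    split; intros; symmetry; apply E; auto.
  - auto.
Qed.

Lemma winning_cons q vs e1 e2 i x y y0 l :
  matching (i :: vs) (upd e1 i x) (upd e2 i y) ->
  q <= length l -> NoDup l ->
  (forall z, In z l -> sigma y0 z /\ (forall j, In j vs -> e2 j <> z) /\ y <> z) ->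
  (forall j, In j vs -> singleton_class rho (e1 j) \/ sigma y0 (e2 j)) ->
  singleton_class rho x \/ sigma y0 y ->
  winning q (i :: vs) (upd e1 i x) (upd e2 i y).
Proof.
  intros Hm Hq Hl Hfree Hold Hnew. split; [exact Hm|].
  exists y0, l. split; [exact Hq|split; [exact Hl|split]].
  - intros z Hz. destruct (Hfree z Hz) as [Hy0 [Hvs Hy]]. split; [exact Hy0|].
    intros j Hj. destruct (upd_cases e1 e2 i x y vs j Hj) as [[_ ->]|[Hj' [_ ->]]]; auto.
  - intros j Hj. destruct (upd_cases e1 e2 i x y vs j Hj) as [[-> ->]|[Hj' [-> ->]]]; auto.
Qed.

Lemma winning_reuse q vs e1 e2 i k :
  winning (S q) vs e1 e2 -> In k vs ->
  winning q (i :: vs) (upd e1 i (e1 k)) (upd e2 i (e2 k)).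
Proof.
  intros [Hm [y0 [l [Hq [Hl [Hfree Hold]]]]]] Hk.
  apply winning_cons with y0 l; auto; try lia.
  - apply matching_cons; auto. intros j Hj. destruct (Hm k j Hk Hj) as [E R].
    split; [exact E|split; [exact R|apply Hm; auto]].
  - intros z Hz. destruct (Hfree z Hz) as [Hy0 Hvs]. auto.
Qed.

Lemma winning_forth q vs e1 e2 i x :
  winning (S q) vs e1 e2 ->
  exists y, winning q (i :: vs) (upd e1 i x) (upd e2 i y).
Proof.
  intros Hw. destruct (classic (exists k, In k vs /\ e1 k = x)) as [[k [Hk <-]]|Hnew].
  { exists (e2 k). apply winning_reuse; auto. }
  destruct Hw as [Hm [y0 [[|a l] [Hq [Hl [Hfree Hold]]]]]]; [simpl in Hq; lia|].
  inversion Hl as [|? ? Ha Hl']; subst.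
  destruct (Hfree a (or_introl eq_refl)) as [Hy0a Hvsa].
  assert (Hrel : forall j, In j vs -> rho x (e1 j) -> sigma y0 (e2 j)).
  { intros j Hj Hxj. destruct (Hold j Hj) as [Hs|Hs]; [|exact Hs].
    exfalso. apply Hnew. exists j. split; [exact Hj|].
    symmetry. apply Hs. symmetry. exact Hxj. }
  exists a. apply winning_cons with y0 l; auto; try (simpl in Hq; lia).
  - apply matching_cons; auto. intros j Hj. split; [|split].
    + split; intros E; exfalso; [apply Hnew; eauto|apply (Hvsa j Hj); auto].
    + intros Hxj. transitivity y0; [symmetry; exact Hy0a|auto].
    + intros Hjx. transitivity y0; [symmetry; apply Hrel; auto; symmetry; auto|exact Hy0a].
  - intros z Hz. destruct (Hfree z (or_intror Hz)) as [Hy0 Hvs].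
    split; [exact Hy0|split; [exact Hvs|]]. intros ->. contradiction.
Qed.

Lemma winning_back q vs e1 e2 i y :
  winning (S q) vs e1 e2 ->
  exists x, winning q (i :: vs) (upd e1 i x) (upd e2 i y).
Proof.
  intros Hw. destruct (classic (exists k, In k vs /\ e2 k = y)) as [[k [Hk <-]]|Hnew].
  { exists (e1 k). apply winning_reuse; auto. }
  destruct Hw as [Hm [y0 [l [Hq [Hl [Hfree Hold]]]]]].
  destruct (infinitely_many_avoid _ (map e1 vs) rho_singletons) as [s [Hs Hsvs]].
  assert (Hsj : forall j, In j vs -> s <> e1 j).
  { intros j Hj ->. apply Hsvs, in_map, Hj. }
  destruct (NoDup_diff_length l [y] Hl) as [l' [Hl' [Hsub Hlen]]].
  exists s. apply winning_cons with y0 l'; auto; try (simpl in *; lia).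
  - apply matching_cons; auto. intros j Hj. split; [|split].
    + split; intros E; exfalso; [apply (Hsj j); auto|apply Hnew; eauto].
    + intros Hsr. exfalso. apply (Hsj j Hj). symmetry. apply Hs, Hsr.
    + intros Hsr. exfalso. apply (Hsj j Hj). symmetry. apply Hs. symmetry. exact Hsr.
  - intros z Hz. destruct (Hsub z Hz) as [Hzl Hzy].
    destruct (Hfree z Hzl) as [Hy0 Hvs]. split; [exact Hy0|split; [exact Hvs|]].
    intros ->. apply Hzy. left. reflexivity.
Qed.

Lemma winning_sat (f : pform) : forall q vs e1 e2,
  qdepth f <= q -> (forall k, free_in k f -> In k vs) ->
  winning q vs e1 e2 -> sat rho e1 f -> sat sigma e2 f.
Proof.
  induction f as [i j|i j|i j|f IHf g IHg|f IHf g IHg|i f IHf|i f IHf];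
    intros q vs e1 e2 Hd Hfree Hw; simpl in *.
  - apply (proj1 Hw); auto.
  - apply (proj1 Hw); auto.
  - intros Hne E. apply Hne. apply (proj1 Hw); auto.
  - intros [Hf Hg]. split; [apply IHf with q vs e1|apply IHg with q vs e1];
      auto; try lia; intros k Hk; apply Hfree; auto.
  - intros [Hf|Hg]; [left; apply IHf with q vs e1|right; apply IHg with q vs e1];
      auto; try lia; intros k Hk; apply Hfree; auto.
  - destruct q as [|q]; [lia|]. intros Hall y.
    destruct (winning_back q vs e1 e2 i y Hw) as [x Hx].
    apply IHf with q (i :: vs) (upd e1 i x); auto; [lia|].
    intros k Hk. destruct (Nat.eq_dec k i); [left|right]; auto.
  - destruct q as [|q]; [lia|]. intros [x Hx].
    destruct (winning_forth q vs e1 e2 i x Hw) as [y Hy].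
    exists y. apply IHf with q (i :: vs) (upd e1 i x); auto; [lia|].
    intros k Hk. destruct (Nat.eq_dec k i); [left|right]; auto.
Qed.

Lemma positive_transfer (f : pform) :
  (forall n, exists y, class_size_ge sigma y n) ->
  sentence f -> holds rho f -> holds sigma f.
Proof.
  intros Hlarge Hf Hh e2.
  destruct (infinitely_many_avoid _ [] rho_singletons) as [x0 _].
  destruct (Hlarge (qdepth f)) as [y0 [l [Hlen [Hl Hy0]]]].
  apply (winning_sat f (qdepth f) [] (fun _ => x0) e2); [lia| | |apply Hh].
  - intros k Hk. exfalso. exact (Hf k Hk).
  - split; [intros i j []|]. exists y0, l.
    split; [lia|split; [exact Hl|split]]; [|intros j []].
    intros z Hz. split; [auto|intros j []].
Qed.

End PositiveTransfer.

(** * Condensations built by back and forth *)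

Section BackAndForth.
Variables (X Y : Type) (rho : X -> X -> Prop) (sigma : Y -> Y -> Prop).
Variable G : list (X * Y) -> Prop.
Hypotheses (G_nil : G [])
  (G_partial : forall p, G p -> partial_injection p /\ preserves rho sigma p)
  (G_forth : forall p x, G p -> ~ In x (map fst p) ->
     exists p', G p' /\ incl p p' /\ In x (map fst p'))
  (G_back : forall p y, G p -> ~ In y (map snd p) ->
     exists p', G p' /\ incl p p' /\ In y (map snd p')).

Lemma extend_dom_ran p x y : G p ->
  exists p', G p' /\ incl p p' /\ In x (map fst p') /\ In y (map snd p').
Proof.
  intros Hp.
  assert (Hx : exists p1, G p1 /\ incl p p1 /\ In x (map fst p1)).
  { destruct (classic (In x (map fst p))) as [Hx|Hx]; [|apply G_forth; auto].
    exists p. split; [exact Hp|split; [apply incl_refl|exact Hx]]. }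
  destruct Hx as [p1 [Hp1 [Hincl1 Hx1]]].
  destruct (classic (In y (map snd p1))) as [Hy1|Hy1].
  - exists p1. auto.
  - destruct (G_back p1 y Hp1 Hy1) as [p2 [Hp2 [Hincl2 Hy2]]].
    exists p2. split; [exact Hp2|split; [|split; [|exact Hy2]]].
    + apply (incl_tran Hincl1 Hincl2).
    + apply (incl_map fst Hincl2), Hx1.
Qed.

Variables (eX : nat -> X) (eY : nat -> Y).

Lemma exhausting_chain : exists s : nat -> list (X * Y),
  (forall n, G (s n)) /\ (forall n m, n <= m -> incl (s n) (s m)) /\
  (forall n, In (eX n) (map fst (s (S n))) /\ In (eY n) (map snd (s (S n)))).
Proof.
  assert (Hstep : forall pn : list (X * Y) * nat, exists p', G (fst pn) ->
    G p' /\ incl (fst pn) p' /\ In (eX (snd pn)) (map fst p') /\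
    In (eY (snd pn)) (map snd p')).
  { intros [p n]. destruct (classic (G p)) as [Hp|Hp].
    - destruct (extend_dom_ran p (eX n) (eY n) Hp) as [p' Hp']. exists p'. auto.
    - exists p. simpl. tauto. }
  destruct (choice _ Hstep) as [ext Hext].
  pose (s := fix s n := match n with 0 => [] | S n => ext (s n, n) end).
  assert (Hs : forall n, G (s n)).
  { induction n as [|n IH]; [exact G_nil|apply (Hext (s n, n)), IH]. }
  exists s. split; [exact Hs|split].
  - intros n m Hnm. induction Hnm; [apply incl_refl|].
    apply (incl_tran IHHnm), (Hext (s m, m)), Hs.
  - intros n. apply (Hext (s n, n)), Hs.
Qed.

Hypotheses (eX_surj : forall x, exists n, eX n = x) (eY_surj : forall y, exists n, eY n = y).

Theorem condensable_of_back_and_forth : condensable rho sigma.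
Proof.
  destruct exhausting_chain as [s [Hs [Hmono Hexh]]].
  assert (Hcommon : forall a b n m, In a (s n) -> In b (s m) ->
    In a (s (Nat.max n m)) /\ In b (s (Nat.max n m))).
  { intros a b n m Ha Hb. split; [apply (Hmono n)|apply (Hmono m)]; auto; lia. }
  assert (Hdom : forall x, exists y n, In (x, y) (s n)).
  { intros x. destruct (eX_surj x) as [n <-].
    pose proof (proj1 (Hexh n)) as Hx. apply in_map_iff in Hx as [[x y] [Ex Hxy]].
    simpl in Ex. subst x. eauto. }
  destruct (choice _ Hdom) as [F HF].
  exists F. split; [split|].
  - intros x x' E. destruct (HF x) as [n Hn], (HF x') as [n' Hn'].
    rewrite E in Hn. destruct (Hcommon _ _ _ _ Hn Hn') as [Hn1 Hn1'].
    destruct (G_partial _ (Hs (Nat.max n n'))) as [[_ Hinj] _]. eapply Hinj; eauto.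
  - intros y. destruct (eY_surj y) as [n <-].
    pose proof (proj2 (Hexh n)) as Hy. apply in_map_iff in Hy as [[x y] [Ey Hxy]].
    simpl in Ey. subst y. exists x. destruct (HF x) as [m Hm].
    destruct (Hcommon _ _ _ _ Hm Hxy) as [Hm1 Hxy1].
    destruct (G_partial _ (Hs (Nat.max m (S n)))) as [[Hfun _] _]. eapply Hfun; eauto.
  - intros x x' Hr. destruct (HF x) as [n Hn], (HF x') as [n' Hn'].
    destruct (Hcommon _ _ _ _ Hn Hn') as [Hn1 Hn1'].
    destruct (G_partial _ (Hs (Nat.max n n'))) as [_ Hpres]. eapply Hpres; eauto.
Qed.

End BackAndForth.

(** * Condensations between structures of the class *)

Section Condensations.
Variables (X Y : Type) (rho : X -> X -> Prop) (sigma : Y -> Y -> Prop).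
Hypotheses (X_count : countably_infinite X) (Y_count : countably_infinite Y)
  (rho_equiv : Equivalence rho) (sigma_equiv : Equivalence sigma)
  (rho_singletons : infinitely_many (singleton_class rho)).

Lemma condensable_by_extensions (G : list (X * Y) -> Prop) :
  G [] ->
  (forall p, G p -> partial_injection p /\ preserves rho sigma p) ->
  (forall p x, G p -> ~ In x (map fst p) ->
     exists p', G p' /\ incl p p' /\ In x (map fst p')) ->
  (forall p y, G p -> ~ In y (map snd p) ->
     exists p', G p' /\ incl p p' /\ In y (map snd p')) ->
  condensable rho sigma.
Proof.
  intros. destruct (countably_infinite_enum X_count) as [eX HeX].
  destruct (countably_infinite_enum Y_count) as [eY HeY].
  apply (condensable_of_back_and_forth X Y rho sigma G) with eX eY; auto.
Qed.

Lemma condensable_onto_infinite_class (ys : Y) :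
  infinitely_many (sigma ys) -> condensable rho sigma.
Proof.
  intros Hys. apply condensable_by_extensions with (fun p => partial_injection p /\
    forall x y, In (x, y) p -> singleton_class rho x \/ sigma ys y).
  - split; [split; intros ? ? ? []|intros ? ? []].
  - intros p [Hp Hsplit]. split; [exact Hp|]. intros x y x' y' Hxy Hxy' Hr.
    destruct (classic (x = x')) as [<-|Hne].
    + rewrite ((proj1 Hp) _ _ _ Hxy Hxy'). reflexivity.
    + destruct (Hsplit _ _ Hxy) as [Hs|Hs];
        [exfalso; apply Hne; symmetry; apply Hs, Hr|].
      destruct (Hsplit _ _ Hxy') as [Hs'|Hs'];
        [exfalso; apply Hne; apply Hs'; symmetry; exact Hr|].
      transitivity ys; [symmetry|]; assumption.
  - intros p x [Hp Hsplit] Hx.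
    destruct (infinitely_many_avoid _ (map snd p) Hys) as [y [Hy Hyp]].
    exists ((x, y) :: p). split; [split|split; [apply incl_tl, incl_refl|left; reflexivity]].
    + apply partial_injection_cons; auto.
    + intros a b [E|Hab]; [inversion E; subst; right; exact Hy|auto].
  - intros p y [Hp Hsplit] Hy.
    destruct (infinitely_many_avoid _ (map fst p) rho_singletons) as [s [Hs Hsp]].
    exists ((s, y) :: p). split; [split|split; [apply incl_tl, incl_refl|left; reflexivity]].
    + apply partial_injection_cons; auto.
    + intros a b [E|Hab]; [inversion E; subst; left; exact Hs|auto].
Qed.

Definition class_closed (p : list (X * Y)) : Prop :=
  forall x y z, In (x, y) p -> rho x z -> In z (map fst p).

Lemma finite_class_forth p x :
  (forall n, exists y, class_size_ge sigma y n) -> class_finite rho x ->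
  partial_injection p -> preserves rho sigma p -> class_closed p ->
  ~ In x (map fst p) ->
  exists q, partial_injection (q ++ p) /\ preserves rho sigma (q ++ p) /\
            class_closed (q ++ p) /\ In x (map fst (q ++ p)).
Proof.
  intros Hlarge Hfin Hp Hpres Hclosed Hx.
  destruct (class_finite_list rho x Hfin) as [C [HC HCx]].
  destruct (Hlarge (length C + length (map snd p))) as [y0 [l [Hlen [Hl Hly0]]]].
  destruct (NoDup_diff_length l (map snd p) Hl) as [L [HL [HLsub HLlen]]].
  assert (HCL : length C <= length L) by lia.
  assert (Hq : forall a b, In (a, b) (combine C L) ->
    rho x a /\ sigma y0 b /\ ~ In b (map snd p)).
  { intros a b Hab. destruct (HLsub b (in_combine_r _ _ _ _ Hab)) as [Hb Hbp].
    split; [apply HCx, (in_combine_l _ _ _ _ Hab)|split; [apply Hly0|]; auto]. }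
  assert (Hfar : forall a b, In (a, b) p -> ~ rho x a).
  { intros a b Hab Hxa. apply Hx, (Hclosed a b x Hab). symmetry. exact Hxa. }
  exists (combine C L). split; [|split; [|split]].
  - apply partial_injection_app; auto using combine_partial_injection.
    + intros a Ha Hap. apply in_map_iff in Ha as [[a' b] [Ea Hab]].
      apply in_map_iff in Hap as [[a'' b'] [Ea' Hab']]. simpl in Ea, Ea'. subst.
      apply (Hfar _ _ Hab'), (Hq _ _ Hab).
    + intros b Hb. apply in_map_iff in Hb as [[a b'] [Eb Hab]]. simpl in Eb. subst.
      apply (Hq _ _ Hab).
  - intros a b a' b' H H' Hr. apply in_app_iff in H, H'.
    destruct H as [H|H], H' as [H'|H'].
    + transitivity y0; [symmetry; apply (Hq _ _ H)|apply (Hq _ _ H')].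
    + exfalso. apply (Hfar _ _ H'). transitivity a; [apply (Hq _ _ H)|exact Hr].
    + exfalso. apply (Hfar _ _ H). transitivity a'; [apply (Hq _ _ H')|symmetry; exact Hr].
    + apply (Hpres a b a' b'); auto.
  - intros a b z H Hz. rewrite map_app, in_app_iff. apply in_app_iff in H as [H|H].
    + left. apply combine_dom; [exact HCL|]. apply HCx.
      transitivity a; [apply (Hq _ _ H)|exact Hz].
    + right. apply (Hclosed a b z H Hz).
  - rewrite map_app, in_app_iff. left. apply combine_dom; [exact HCL|]. apply HCx. reflexivity.
Qed.

Lemma condensable_of_finite_classes :
  (forall n, exists y, class_size_ge sigma y n) -> (forall x, class_finite rho x) ->
  condensable rho sigma.
Proof.
  intros Hlarge Hfin.
  apply condensable_by_extensions with (fun p =>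
    partial_injection p /\ preserves rho sigma p /\ class_closed p).
  - split; [split; intros ? ? ? []|split; [intros ? ? ? ? []|intros ? ? ? []]].
  - intros p [Hp [Hpres _]]. auto.
  - intros p x [Hp [Hpres Hclosed]] Hx.
    destruct (finite_class_forth p x Hlarge (Hfin x) Hp Hpres Hclosed Hx) as [q Hq].
    exists (q ++ p). split; [tauto|]. split; [apply incl_appr, incl_refl|apply Hq].
  - intros p y [Hp [Hpres Hclosed]] Hy.
    destruct (infinitely_many_avoid _ (map fst p) rho_singletons) as [s [Hs Hsp]].
    assert (Hsfar : forall a b, In (a, b) p -> ~ rho s a).
    { intros a b Hab Hsa. apply Hsp. rewrite <- (Hs a Hsa). apply (in_map fst) in Hab. exact Hab. }
    exists ((s, y) :: p). split; [split; [|split]|split; [apply incl_tl, incl_refl|left; reflexivity]].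
    + apply partial_injection_cons; auto.
    + intros a b a' b' [E|H] [E'|H'] Hr.
      * inversion E; inversion E'; subst. reflexivity.
      * inversion E; subst. exfalso. apply (Hsfar _ _ H' Hr).
      * inversion E'; subst. exfalso. apply (Hsfar _ _ H). symmetry. exact Hr.
      * apply (Hpres a b a' b'); auto.
    + intros a b z [E|H] Hz.
      * inversion E; subst. left. symmetry. apply Hs, Hz.
      * right. apply (Hclosed a b z H Hz).
Qed.

End Condensations.

Lemma class_finite_of_condensable {X Y : Type} (rho : X -> X -> Prop) (sigma : Y -> Y -> Prop) :
  condensable rho sigma -> (forall y, class_finite sigma y) -> forall x, class_finite rho x.
Proof.
  intros [F [[F_inj F_surj] F_hom]] Hfin x.
  destruct (Hfin (F x)) as [l Hl]. destruct (choice _ F_surj) as [G HG].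
  exists (map G l). intros x' Hx'.
  replace x' with (G (F x')) by apply F_inj, HG.
  apply in_map, Hl, F_hom, Hx'.
Qed.

Lemma inComega_infinite_class {Y : Type} (sigma : Y -> Y -> Prop) :
  inComega Y sigma -> exists y, infinitely_many (sigma y).
Proof.
  intros [HY Hnot]. apply NNPP. intros Hno. apply Hnot. split; [exact HY|].
  intros y. apply NNPP. intros Hy. apply Hno. exists y. exact Hy.
Qed.

Lemma condensable_iff {X Y : Type} (rho : X -> X -> Prop) (sigma : Y -> Y -> Prop) :
  inC X rho -> inC Y sigma ->
  (condensable rho sigma <-> inCfin X rho \/ inComega Y sigma).
Proof.
  intros HX HY. pose proof HX as [X_count [rho_equiv [rho_singletons _]]].
  pose proof HY as [Y_count [sigma_equiv [_ sigma_large]]]. split.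
  - intros Hc. destruct (classic (inCfin X rho)) as [Hfin|Hfin]; [left; exact Hfin|right].
    split; [exact HY|]. intros [_ HYfin]. apply Hfin. split; [exact HX|].
    exact (class_finite_of_condensable rho sigma Hc HYfin).
  - intros [[_ Hfin]|Homega].
    + apply condensable_of_finite_classes; auto.
    + destruct (inComega_infinite_class sigma Homega) as [ys Hys].
      apply condensable_onto_infinite_class with ys; auto.
Qed.

Theorem claim6p1 :
  forall (X Y : Type) (rho : X -> X -> Prop) (sigma : Y -> Y -> Prop),
    inC X rho -> inC Y sigma ->
    P_equiv rho sigma /\
    (condensable rho sigma <-> inCfin X rho \/ inComega Y sigma) /\
    (cond_equiv rho sigma <->
       (inCfin X rho /\ inCfin Y sigma) \/ (inComega X rho /\ inComega Y sigma)).
Proof.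
  intros X Y rho sigma HX HY.
  pose proof HX as [_ [rho_equiv [rho_singletons rho_large]]].
  pose proof HY as [_ [sigma_equiv [sigma_singletons sigma_large]]].
  split; [|split].
  - intros f Hf. split; apply positive_transfer; auto.
  - apply condensable_iff; auto.
  - unfold cond_equiv. rewrite (condensable_iff rho sigma HX HY), (condensable_iff sigma rho HY HX).
    unfold inComega.
    destruct (classic (inCfin X rho)), (classic (inCfin Y sigma)); tauto.
Qed.
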